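(* Let $\tau$ be a veering triangulation of $M$ with dual graph $\Gamma$. If two directed cycles $c_1,c_2$ in $\Gamma$ are freely homotopic in $M$, then the number of anti-branching turns of $c_1$ and the number of anti-branching turns of $c_2$ have the same parity.
   Context: $\tau$ is a veering triangulation of $M$ (taut ideal triangulation with cooriented faces, each tetrahedron having two bottom and two top faces, a bottom edge, a top edge and four side edges, angle sum $2\pi$ around edges, with a consistent right/left veer on edges modelled on a thickened rhombus whose side edges of positive slope are right-veering and of negative slope left-veering). The dual graph $\Gamma$ has a vertex in the interior of each tetrahedron and, for each face, a directed edge crossing that face from the tetrahedron for which it is a top face to the tetrahedron for which it is a bottom face; it is embedded in $M$. For a bottom face $f$ of a tetrahedron $t$, let $A(f)$ be the top face of $t$ meeting $f$ along the edge of $t$ whose veer equals that of the top edge of $t$. A directed cycle in $\Gamma$ passing through a tetrahedron $t$ enters through a bottom face $f$ and exits through a top face $f'$; this turn (at the vertex of $t$) is anti-branching if $f'=A(f)$ and branching otherwise. Turns are counted cyclically around the cycle. *)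

From Stdlib Require Import Relations.
From mathcomp Require Import all_boot all_fingroup.

Set Implicit Arguments.
Unset Strict Implicit.
Unset Printing Implicit Defensive.

(* Tetrahedra form a finite type T; each tetrahedron has vertex labels      *)
(* 'I_4 = {0,1,2,3}.  Face slot i of t is the face opposite vertex i.       *)
(* The gluing of face slot i of t is given by gt t i (the tetrahedron on    *)
(* the other side) and gp t i (the vertex bijection, sending the face i of  *)
(* t onto the face (gp t i i) of (gt t i)).                                 *)
(* Taut/veering labelling convention: in every tetrahedron the bottom edge  *)
(* is {0,2} and the top edge is {1,3}; hence the bottom faces are the faces *)
(* opposite 1 and 3, the top faces those opposite 0 and 2; the side edges   *)
(* are 01, 12, 23, 30 (the vertices 0,1,2,3 run around the square seen     *)
(* from above, with a fixed handedness, tetrahedra positively oriented).    *)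

Definition l0 : 'I_4 := inord 0.
Definition l1 : 'I_4 := inord 1.
Definition l2 : 'I_4 := inord 2.
Definition l3 : 'I_4 := inord 3.

Definition topslot (i : 'I_4) : bool := (val i == 0) || (val i == 2).

(* the edge slot e (ordered pair of labels) is a diagonal (top or bottom)   *)
(* edge, i.e. carries dihedral angle pi in the taut structure               *)
Definition diagonal (e : 'I_4 * 'I_4) : bool :=
  ([set e.1; e.2] == [set l0; l2]) || ([set e.1; e.2] == [set l1; l3]).

Section Tri.
Variable T : finType.
Variable gt : T -> 'I_4 -> T.
Variable gp : T -> 'I_4 -> {perm 'I_4}.
Variable veer : T -> {set 'I_4} -> bool. (* true = right-veering *)

Definition edge_step : rel (T * ('I_4 * 'I_4)) := fun x y =>
  [exists i : 'I_4, [&& i != x.2.1, i != x.2.2, y.1 == gt x.1 i,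
                        y.2.1 == gp x.1 i x.2.1 & y.2.2 == gp x.1 i x.2.2]].

(* tau is a veering triangulation of the oriented 3-manifold M obtained by  *)
(* gluing the (ideal) tetrahedra                                            *)
Record is_veering : Prop := {
  glue_invol : forall t i,
    gt (gt t i) (gp t i i) = t /\ gp (gt t i) (gp t i i) = (gp t i)^-1%g;
  (* coorientations: each face is a top face of one tetrahedron and a bottom *)
  (* face of the other                                                      *)
  glue_coor : forall t i, topslot (gp t i i) = ~~ topslot i;
  (* M is oriented and all tetrahedra are positively labelled *)
  glue_orient : forall t i, odd_perm (gp t i);
  (* no edge is identified with itself in reverse (M is a manifold) *)
  edge_manifold : forall t (a b : 'I_4), a != b ->
    ~~ connect edge_step (t, (a, b)) (t, (b, a));
  (* angle sum 2 pi around every edge: exactly two pi-angles *)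
  edge_angle : forall t (a b : 'I_4), a != b ->
    #|[set y | connect edge_step (t, (a, b)) y & diagonal y.2]| = 2;
  (* the veer is a function of the edges of tau *)
  veer_glue : forall t i (a b : 'I_4), a != i -> b != i ->
    veer (gt t i) [set gp t i a; gp t i b] = veer t [set a; b];
  (* side edges: positive slope (01, 23) right, negative slope (12, 30) left *)
  veer_sides : forall t,
    [/\ veer t [set l0; l1], veer t [set l2; l3],
        ~~ veer t [set l1; l2] & ~~ veer t [set l3; l0]]
}.

(* Paths.  A step (t, i) leaves the tetrahedron t through its face slot i   *)
(* (i.e. crosses an edge of the dual graph Gamma, forwards if i is a top    *)
(* slot, backwards otherwise).  A closed path is a base tetrahedron v with  *)
(* a sequence of consecutive steps returning to v.                          *)

Fixpoint walk (v : T) (s : seq (T * 'I_4)) : option T :=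
  match s with
  | [::] => Some v
  | x :: s' => if x.1 == v then walk (gt x.1 x.2) s' else None
  end.

Definition closed_path (c : T * seq (T * 'I_4)) : bool :=
  walk c.1 c.2 == Some c.1.

(* directed cycle in Gamma: nonempty closed path all of whose steps go      *)
(* through top faces, i.e. follow the direction of the edges of Gamma       *)
Definition directed_cycle (c : T * seq (T * 'I_4)) : bool :=
  [&& c.2 != [::], all (fun x => topslot x.2) c.2 & closed_path c].

Definition inv_step (x : T * 'I_4) : T * 'I_4 := (gt x.1 x.2, gp x.1 x.2 x.2).

(* 2-cells of the dual 2-complex (a spine of M): one for each edge of tau,  *)
(* attached along the cycle of faces around that edge.  A flag (t,a,b,c)    *)
(* is the edge {a,b} of t together with the face c of t (c not in {a,b})    *)
(* through which one leaves t while turning around that edge.              *)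
Definition third (x y z : 'I_4) : 'I_4 := inord (6 - (x + y + z)).

Definition flagnext (f : T * 'I_4 * 'I_4 * 'I_4) : T * 'I_4 * 'I_4 * 'I_4 :=
  let: (t, a, b, c) := f in
  let p := gp t c in (gt t c, p a, p b, third (p a) (p b) (p c)).

Definition valid_flag (f : T * 'I_4 * 'I_4 * 'I_4) : bool :=
  let: (t, a, b, c) := f in [&& a != b, a != c & b != c].

(* boundary word of the 2-cell around the edge of the flag f, read from f *)
Definition relator (f : T * 'I_4 * 'I_4 * 'I_4) : seq (T * 'I_4) :=
  [seq (g.1.1.1, g.2) | g <- fingraph.orbit flagnext f].

(* elementary moves of free homotopy of closed edge paths in the dual       *)
(* 2-complex: cyclic rotation, cancelling a backtrack, cancelling the       *)
(* boundary of a 2-cell                                                     *)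
Definition hmove (p q : T * seq (T * 'I_4)) : Prop :=
  (exists x s, p = (x.1, x :: s) /\ q = (gt x.1 x.2, rcons s x))
  \/ (exists s1 s2 x, p.1 = q.1 /\ p.2 = s1 ++ x :: inv_step x :: s2
                      /\ q.2 = s1 ++ s2)
  \/ (exists s1 s2 f, valid_flag f /\ p.1 = q.1
                      /\ p.2 = s1 ++ relator f ++ s2 /\ q.2 = s1 ++ s2).

Definition hstep (p q : T * seq (T * 'I_4)) : Prop :=
  [/\ closed_path p, closed_path q & hmove p q].

Definition free_homotopic (p q : T * seq (T * 'I_4)) : Prop :=
  clos_refl_sym_trans _ hstep p q.

(* A(f) for the bottom face slot i of t: the top face of t meeting face i  *)
(* along the (side) edge whose veer equals the veer of the top edge {1,3}.  *)
(* The top face opposite 0 meets face i along the edge ~: {i,0}.            *)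
Definition Aface (t : T) (i : 'I_4) : 'I_4 :=
  if veer t (~: [set i; l0]) == veer t [set l1; l3] then l0 else l2.

(* turn at the tetrahedron y.1 between consecutive steps x, y of a directed *)
(* cycle: enter through the bottom face gp x.1 x.2 x.2, exit through y.2    *)
Definition antibranching (x y : T * 'I_4) : bool :=
  y.2 == Aface y.1 (gp x.1 x.2 x.2).

Definition n_antibranching (s : seq (T * 'I_4)) : nat :=
  count (fun xy => antibranching xy.1 xy.2) (zip s (rot 1 s)).

End Tri.

From Stdlib Require Import Relations.
From mathcomp Require Import all_boot all_fingroup.
From mathcomp Require Import zify.

Set Implicit Arguments.
Unset Strict Implicit.
Unset Printing Implicit Defensive.

(* Give every face slot of a tetrahedron a sign in Z/2 ([face_sign]) such that a turn from a
   bottom face into a top face is anti-branching exactly when the two signs differ.  Along a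
   directed cycle the parity of anti-branching turns is then the parity of the number of dual
   edges whose two sides carry different signs ([crossing_sign]), a Z/2-valued 1-cochain on the
   dual 2-complex.  This cochain is unchanged by backtracking, and it is a cocycle: around each
   edge of tau it is the coboundary of a potential on (tetrahedron, edge, face) flags, built from
   a mark on the edges of each face that is the same seen from both sides of the face.  That
   gluing invariance is where the veer and orientation conditions enter.  Hence the parity is
   invariant under free homotopy. *)

Lemma odd_count_addb (A : Type) (p q : pred A) (s : seq A) :
  odd (count (fun x => p x (+) q x) s) = odd (count p s) (+) odd (count q s).
Proof.
elim: s => //= x s IHs; rewrite !oddD IHs.
by case: (p x); case: (q x); case: (odd (count p s)); case: (odd (count q s)).
Qed.

Lemma count_rot (A : Type) (a : pred A) (n : nat) (s : seq A) :
  count a (rot n s) = count a s.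
Proof. by rewrite /rot count_cat addnC -count_cat cat_take_drop. Qed.

Lemma fcycle_map_rot (T : eqType) (f : T -> T) (s : seq T) :
  fcycle f s -> map f s = rot 1 s.
Proof.
case: s => // x p; rewrite rot1_cons /=.
elim: p x {1 3}x => [|y p IHp] x z /=; first by rewrite andbT => /eqP ->.
by case/andP=> /eqP -> /IHp ->.
Qed.

Lemma fcycle_count_addb (T : eqType) (f : T -> T) (K : pred T) (s : seq T) :
  fcycle f s -> ~~ odd (count (fun x => K x (+) K (f x)) s).
Proof.
move=> cyc_s; rewrite odd_count_addb -(count_map f K) fcycle_map_rot //.
by rewrite count_rot addbb.
Qed.

Lemma cycle_zip_rot (A : Type) (e : rel A) (s : seq A) :
  path.cycle e s -> all (fun uv => e uv.1 uv.2) (zip s (rot 1 s)).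
Proof.
case: s => // x p; rewrite rot1_cons /=; move: {1 3}x.
elim: p => [|y p IHp] z /=; first by rewrite !andbT.
by case/andP=> -> /IHp.
Qed.

Lemma odd_count_zip_rot (A : Type) (f g : pred A) (s : seq A) :
  odd (count (fun uv => f uv.1 (+) g uv.2) (zip s (rot 1 s))) =
  odd (count f s) (+) odd (count g s).
Proof.
have size_s : size s = size (rot 1 s) by rewrite size_rot.
set z := zip s (rot 1 s).
have z1 : unzip1 z = s by rewrite unzip1_zip ?size_s.
have z2 : unzip2 z = rot 1 s by rewrite unzip2_zip ?size_s.
rewrite -(count_rot g 1) -z2 -[in count f s]z1 !count_map.
exact: (odd_count_addb (preim fst f) (preim snd g)).
Qed.

Lemma distinct3_perm (X : finType) (s : {perm X}) (a b c : X) :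
  [&& a != b, a != c & b != c] -> [&& s a != s b, s a != s c & s b != s c].
Proof. by rewrite !(inj_eq perm_inj). Qed.

(* Local checks on one tetrahedron are decided by computation on the natural-number values of
   the vertex labels: the labels [l0], ..., [l3] are built with [inord], which does not reduce. *)
Definition labels : seq nat := iota 0 4.

Lemma labelsP (P : pred nat) : reflect (forall k : 'I_4, P k) (all P labels).
Proof.
rewrite /labels; apply: (iffP allP) => [allP k | allP n].
  by apply: allP; rewrite mem_iota add0n ltn_ord.
by rewrite mem_iota add0n => /= lt_n4; apply: (allP (Ordinal lt_n4)).
Qed.

Lemma val_l0 : val l0 = 0. Proof. by rewrite /= inordK. Qed.
Lemma val_l1 : val l1 = 1. Proof. by rewrite /= inordK. Qed.
Lemma val_l2 : val l2 = 2. Proof. by rewrite /= inordK. Qed.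
Lemma val_l3 : val l3 = 3. Proof. by rewrite /= inordK. Qed.

Lemma label_cases (k : 'I_4) : [\/ k = l0, k = l1, k = l2 | k = l3].
Proof.
case: k => [[|[|[|[|m]]]] lt_k4] //;
  [apply: Or41 | apply: Or42 | apply: Or43 | apply: Or44]; by apply: val_inj; rewrite /= inordK.
Qed.

Lemma third_spec (x y z : 'I_4) : [&& x != y, x != z & y != z] ->
  [/\ third x y z = 6 - (x + y + z) :> nat, third x y z != x, third x y z != y,
      third x y z != z & third x y (third x y z) = z].
Proof.
have val_third (a b c : 'I_4) : a + b + c >= 3 -> third a b c = 6 - (a + b + c) :> nat.
  by move=> sum_ge3; rewrite /third inordK //; lia.
rewrite -!(inj_eq (@ord_inj 4)) => /and3P[xy xz yz].
move: (ltn_ord x) (ltn_ord y) (ltn_ord z) => x4 y4 z4.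
have val_t : third x y z = 6 - (x + y + z) :> nat by apply: val_third; lia.
rewrite val_t; split=> //; try lia.
by apply: ord_inj; rewrite val_third val_t; lia.
Qed.

Definition top_label (i : nat) : bool := (i == 0) || (i == 2).

Lemma topslotE (i : 'I_4) : topslot i = top_label i.
Proof. by []. Qed.

Definition top_edge (a b : nat) : bool := ((a == 1) && (b == 3)) || ((a == 3) && (b == 1)).
Definition bottom_edge (a b : nat) : bool := ((a == 0) && (b == 2)) || ((a == 2) && (b == 0)).
Definition right_side (a b : nat) : bool :=
  [|| (a == 0) && (b == 1), (a == 1) && (b == 0), (a == 2) && (b == 3) | (a == 3) && (b == 2)].

Definition edge_veer (vt vb : bool) (a b : nat) : bool :=
  if top_edge a b then vt else if bottom_edge a b then vb else right_side a b.

Definition face_sign (vt : bool) (i : nat) : bool := (i == 3) || (i == if vt then 0 else 2).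

Definition face_mark (vt : bool) (c a b : nat) : bool :=
  if top_label c then ~~ top_edge a b && (right_side a b == vt) else bottom_edge a b.

Lemma face_sign_turn vt (i o : 'I_4) : ~~ topslot i -> topslot o ->
  (o == if (i == 1 :> nat) == vt then l0 else l2) = face_sign vt i (+) face_sign vt o.
Proof.
have: all (fun i => all (fun o => ~~ top_label i ==> top_label o ==>
  ((o == if (i == 1) == vt then 0 else 2) == face_sign vt i (+) face_sign vt o)) labels) labels.
  by case: vt; vm_compute.
move=> /labelsP/(_ i)/labelsP/(_ o) /implyP check bot_i top_o.
move/implyP: (check bot_i) => /(_ top_o)/eqP <-.
by case: ifP; rewrite -(inj_eq (@ord_inj 4)) ?val_l0 ?val_l2.
Qed.

Lemma face_sign_edge vt (a b c : 'I_4) : [&& a != b, a != c & b != c] ->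
  face_sign vt c (+) face_sign vt (third a b c) =
  ~~ (face_mark vt c a b (+) face_mark vt (third a b c) a b
      (+) topslot c (+) topslot (third a b c)).
Proof.
move=> abc; rewrite !topslotE; have [-> _ _ _ _] := third_spec abc; move: abc.
have: all (fun a => all (fun b => all (fun c => [&& a != b, a != c & b != c] ==>
  let d := 6 - (a + b + c) in
  (face_sign vt c (+) face_sign vt d ==
   ~~ (face_mark vt c a b (+) face_mark vt d a b (+) top_label c (+) top_label d)))
  labels) labels) labels by case: vt; vm_compute.
move=> /labelsP/(_ a)/labelsP/(_ b)/labelsP/(_ c) /implyP check.
by rewrite -!(inj_eq (@ord_inj 4)) => /check/eqP.
Qed.

Definition swap_label (x y i : nat) : nat := if i == x then y else if i == y then x else i.

Lemma tperm_label (x y i : 'I_4) : tperm x y i = swap_label x y i :> nat.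
Proof.
rewrite /swap_label !(inj_eq (@ord_inj 4)).
case: (eqVneq i x) => [->|neq_ix]; first by rewrite tpermL.
by case: (eqVneq i y) => [->|neq_iy]; [rewrite tpermR | rewrite tpermD // eq_sym].
Qed.

Definition perm_labels (s : {perm 'I_4}) : seq nat := [seq val (s i) | i <- enum 'I_4].

Lemma nth_perm_labels (s : {perm 'I_4}) (i : 'I_4) : nth 0 (perm_labels s) i = s i.
Proof. by rewrite (nth_map ord0) ?size_enum_ord // nth_ord_enum. Qed.

Lemma perm_labels_permutations (s : {perm 'I_4}) : perm_labels s \in permutations labels.
Proof.
rewrite mem_permutations /perm_labels /labels -val_enum_ord (map_comp val s) perm_map //.
apply: uniq_perm; rewrite ?enum_uniq ?(map_inj_uniq perm_inj) ?enum_uniq // => i.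
by rewrite mem_enum; apply/mapP; exists (s^-1 i)%g; rewrite ?mem_enum ?permKV.
Qed.

Lemma perm_labels_tpermM (x y : 'I_4) (s : {perm 'I_4}) :
  perm_labels (tperm x y * s) = [seq nth 0 (perm_labels s) (swap_label x y i) | i <- labels].
Proof.
rewrite {1}/perm_labels /labels -val_enum_ord -map_comp; apply: eq_map => i /=.
by rewrite -tperm_label nth_perm_labels permM.
Qed.

Definition inversions (q : seq nat) : nat :=
  count (fun ij => (ij.1 < ij.2) && (nth 0 q ij.2 < nth 0 q ij.1))
    [seq (i, j) | i <- labels, j <- labels].

Lemma odd_inversions_swap (q : seq nat) (x y : 'I_4) : q \in permutations labels -> x != y ->
  odd (inversions [seq nth 0 q (swap_label x y i) | i <- labels]) = ~~ odd (inversions q).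
Proof.
have: all (fun q => all (fun x => all (fun y => (x != y) ==>
  (odd (inversions [seq nth 0 q (swap_label x y i) | i <- labels]) == ~~ odd (inversions q)))
  labels) labels) (permutations labels) by vm_compute.
move=> /allP check /check/labelsP/(_ x)/labelsP/(_ y)/implyP.
by rewrite (inj_eq (@ord_inj 4)) => check_xy /check_xy/eqP.
Qed.

Lemma odd_perm_inversions (s : {perm 'I_4}) : odd_perm s = odd (inversions (perm_labels s)).
Proof.
case: (prod_tpermP s) => ts -> {s}; elim: ts => [|[x y] ts IHts] /=.
  rewrite big_nil odd_perm1 /perm_labels.
  by under eq_map do rewrite perm1; rewrite val_enum_ord.
rewrite big_cons => /andP[/= neq_xy dpair_ts].
by rewrite odd_permM odd_tperm neq_xy IHts // perm_labels_tpermM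
  odd_inversions_swap // perm_labels_permutations.
Qed.

(* Veer compatibility leaves at most two ways of gluing a top face onto a bottom face, differing
   by a transposition; orientation reversal selects the one under which the marks correspond. *)
Lemma face_mark_glue_top (s : {perm 'I_4}) (c : 'I_4) (vt vb vt' vb' : bool) :
  odd_perm s -> topslot c -> ~~ topslot (s c) ->
  (forall x y : 'I_4, [&& x != y, x != c & y != c] ->
     edge_veer vt' vb' (s x) (s y) = edge_veer vt vb x y) ->
  forall a b : 'I_4, [&& a != b, a != c & b != c] ->
  face_mark vt c a b = face_mark vt' (s c) (s a) (s b).
Proof.
have: all (fun q => odd (inversions q) ==> all (fun c =>
    top_label c ==> ~~ top_label (nth 0 q c) ==>
    all (fun x => all (fun y => [&& x != y, x != c & y != c] ==>
      (edge_veer vt' vb' (nth 0 q x) (nth 0 q y) == edge_veer vt vb x y)) labels) labels ==>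
    all (fun a => all (fun b => [&& a != b, a != c & b != c] ==>
      (face_mark vt c a b == face_mark vt' (nth 0 q c) (nth 0 q a) (nth 0 q b))) labels) labels)
  labels) (permutations labels) by case: vt; case: vb; case: vt'; case: vb'; vm_compute.
move=> /allP/(_ _ (perm_labels_permutations s)) + odd_s top_c bot_sc veer_s a b abc.
rewrite -odd_perm_inversions odd_s => /labelsP/(_ c).
rewrite nth_perm_labels -!topslotE top_c bot_sc !implyTb => /implyP check.
have compat: all (fun x : nat => all (fun y : nat => [&& x != y, x != c & y != c] ==>
    (edge_veer vt' vb' (nth 0 (perm_labels s) x) (nth 0 (perm_labels s) y) ==
     edge_veer vt vb x y)) labels) labels.
  apply/labelsP => x; apply/labelsP => y; rewrite !nth_perm_labels.
  by apply/implyP; rewrite !(inj_eq (@ord_inj 4)) => /veer_s ->.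
move: (check compat) => /labelsP/(_ a)/labelsP/(_ b)/implyP.
by rewrite !nth_perm_labels !(inj_eq (@ord_inj 4)) => /(_ abc)/eqP.
Qed.



Section VeeringTriangulation.

Variables (T : finType) (gt : T -> 'I_4 -> T) (gp : T -> 'I_4 -> {perm 'I_4}).
Variable veer : T -> {set 'I_4} -> bool.
Hypothesis tau : is_veering gt gp veer.

Definition top_veer (t : T) : bool := veer t [set l1; l3].
Definition bottom_veer (t : T) : bool := veer t [set l0; l2].

Lemma veer_edge (t : T) (a b : 'I_4) : a != b ->
  veer t [set a; b] = edge_veer (top_veer t) (bottom_veer t) a b.
Proof.
have [v01 v23 v12 v30] := veer_sides tau t.
case: (label_cases a) => ->; case: (label_cases b) => -> neq_ab;
  rewrite ?eqxx // in neq_ab;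
  rewrite /edge_veer /top_edge /bottom_edge /right_side ?val_l0 ?val_l1 ?val_l2 ?val_l3 /=.
all: rewrite ?v01 ?v23 ?(negbTE v12) ?(negbTE v30) //.
all: by rewrite setUC ?v01 ?v23 ?(negbTE v12) ?(negbTE v30).
Qed.

Lemma veer_opposite_bottom (t : T) (i : 'I_4) : ~~ topslot i ->
  veer t (~: [set i; l0]) = (i == 1 :> nat).
Proof.
have [_ v23 v12 _] := veer_sides tau t.
case: (label_cases i) => -> bot_i; rewrite ?val_l1 ?val_l3 //.
- by rewrite /topslot val_l0 in bot_i.
- suff -> : ~: [set l1; l0] = [set l2; l3] by [].
  apply/setP => k; rewrite !inE.
  by case: (label_cases k) => ->; rewrite -!(inj_eq (@ord_inj 4)) ?val_l0 ?val_l1 ?val_l2 ?val_l3.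
- by rewrite /topslot val_l2 in bot_i.
- suff -> : ~: [set l3; l0] = [set l1; l2] by apply: negbTE.
  apply/setP => k; rewrite !inE.
  by case: (label_cases k) => ->; rewrite -!(inj_eq (@ord_inj 4)) ?val_l0 ?val_l1 ?val_l2 ?val_l3.
Qed.

Definition slot_sign (x : T * 'I_4) : bool := face_sign (top_veer x.1) x.2.

Lemma inv_stepK : involutive (inv_step gt gp).
Proof.
by case=> t i; rewrite /inv_step /=; case: (glue_invol tau t i) => -> ->; rewrite permK.
Qed.

Definition crossing_sign (x : T * 'I_4) : bool :=
  slot_sign x (+) slot_sign (inv_step gt gp x).

Lemma crossing_sign_inv (x : T * 'I_4) : crossing_sign (inv_step gt gp x) = crossing_sign x.
Proof. by rewrite /crossing_sign inv_stepK addbC. Qed.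

Definition turn (x y : T * 'I_4) : bool := [&& topslot x.2, topslot y.2 & y.1 == gt x.1 x.2].

Lemma antibranching_slot_sign (x y : T * 'I_4) : turn x y ->
  antibranching gp veer x y = slot_sign (inv_step gt gp x) (+) slot_sign y.
Proof.
case/and3P=> top_x top_y /eqP y1.
have bot_i : ~~ topslot (gp x.1 x.2 x.2) by rewrite (glue_coor tau) top_x.
rewrite /antibranching /Aface /slot_sign /= y1 (veer_opposite_bottom _ bot_i).
exact: face_sign_turn.
Qed.

Lemma walk_turns (v w : T) (x : T * 'I_4) (p : seq (T * 'I_4)) :
  walk gt v (x :: p) = Some w -> all (fun y => topslot y.2) (x :: p) ->
  [/\ x.1 = v, path turn x p & gt (last x p).1 (last x p).2 = w].
Proof.
elim: p v x => [|y p IHp] v x /=; case: eqP => // <- walk_p.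
  by case: walk_p => ->.
case/andP=> top_x tops; have [y1 path_p last_p] := IHp _ _ walk_p tops.
by rewrite /turn top_x y1 eqxx path_p last_p; case/andP: tops => ->.
Qed.

Lemma directed_cycle_turns (c : T * seq (T * 'I_4)) :
  directed_cycle gt c -> path.cycle turn c.2.
Proof.
case: c => v [|x p] //= /and3P[_ tops /eqP /walk_turns/(_ tops)[x1 path_p last_p]].
have top_last : topslot (last x p).2 by apply: (allP tops); apply: mem_last.
by rewrite rcons_path path_p /turn top_last x1 last_p eqxx; case/andP: tops => ->.
Qed.

Lemma directed_cycle_parity (c : T * seq (T * 'I_4)) : directed_cycle gt c ->
  odd (n_antibranching gp veer c.2) = odd (count crossing_sign c.2).
Proof.
move=> /directed_cycle_turns/cycle_zip_rot/allP turns.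
rewrite /n_antibranching (eq_in_count (a2 := fun xy =>
  slot_sign (inv_step gt gp xy.1) (+) slot_sign xy.2)); last first.
  by move=> xy /turns /antibranching_slot_sign.
rewrite (odd_count_zip_rot (fun x => slot_sign (inv_step gt gp x))).
by rewrite odd_count_addb addbC.
Qed.

Lemma face_mark_glue (t : T) (a b c : 'I_4) : [&& a != b, a != c & b != c] ->
  face_mark (top_veer t) c a b =
  face_mark (top_veer (gt t c)) (gp t c c) (gp t c a) (gp t c b).
Proof.
have glue_top u (x y z : 'I_4) : topslot z -> [&& x != y, x != z & y != z] ->
    face_mark (top_veer u) z x y =
    face_mark (top_veer (gt u z)) (gp u z z) (gp u z x) (gp u z y).
  move=> top_z xyz.
  apply: (face_mark_glue_top (vb := bottom_veer u) (vb' := bottom_veer (gt u z))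
    (glue_orient tau u z) top_z _ _ xyz); first by rewrite (glue_coor tau) top_z.
  move=> x' y' /and3P[neq_xy' neq_xz' neq_yz'].
  by rewrite -veer_edge -?veer_edge ?(inj_eq perm_inj) // veer_glue.
move=> abc; case top_c: (topslot c); first exact: glue_top.
have [t_back p_back] := glue_invol tau t c.
by rewrite [RHS]glue_top ?t_back ?p_back ?permK ?(glue_coor tau) ?top_c ?(inj_eq perm_inj).
Qed.

Definition flag_potential (f : T * 'I_4 * 'I_4 * 'I_4) : bool :=
  let: (t, a, b, c) := f in slot_sign (t, c) (+) face_mark (top_veer t) c a b (+) topslot c.

Lemma crossing_sign_flag (f : T * 'I_4 * 'I_4 * 'I_4) : valid_flag f ->
  crossing_sign (f.1.1.1, f.2) = flag_potential f (+) flag_potential (flagnext gt gp f).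
Proof.
case: f => [[[t a] b] c] /= abc.
have := face_sign_edge (top_veer (gt t c)) (distinct3_perm (gp t c) abc).
rewrite -(face_mark_glue t abc) (glue_coor tau) /crossing_sign /slot_sign /=.
set d := third _ _ _.
move: (face_sign _ c) (face_sign _ (gp t c c)) (face_sign _ d) (face_mark _ c a b).
move: (face_mark _ d _ _) (topslot c) (topslot d).
by do 7!case.
Qed.

Lemma flagnext_valid (f : T * 'I_4 * 'I_4 * 'I_4) :
  valid_flag f -> valid_flag (flagnext gt gp f).
Proof.
case: f => [[[t a] b] c] /= abc.
have [_ neq_a neq_b _ _] := third_spec (distinct3_perm (gp t c) abc).
case/and3P: abc => neq_ab _ _.
by rewrite (inj_eq perm_inj) neq_ab eq_sym neq_a eq_sym neq_b.
Qed.

Lemma flagnext_inj : {in (@valid_flag T : pred _) &, injective (flagnext gt gp)}.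
Proof.
move=> [[[t1 a1] b1] c1] [[[t2 a2] b2] c2] /= abc1 abc2 [glue12 a12 b12 c12].
have c12' : gp t1 c1 c1 = gp t2 c2 c2.
  have [_ _ _ _ <-] := third_spec (distinct3_perm (gp t1 c1) abc1).
  have [_ _ _ _ <-] := third_spec (distinct3_perm (gp t2 c2) abc2).
  by rewrite c12 a12 b12.
have [t1_back p1_back] := glue_invol tau t1 c1.
have [t2_back p2_back] := glue_invol tau t2 c2.
have t12 : t1 = t2 by rewrite -t1_back -t2_back glue12 c12'.
subst t2.
have p12 : gp t1 c1 = gp t1 c2 by apply: invg_inj; rewrite -p1_back -p2_back glue12 c12'.
have {c12'} c12 : c1 = c2 by apply: (@perm_inj _ (gp t1 c1)); rewrite {2}p12.
by subst c2; rewrite (perm_inj a12) (perm_inj b12).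
Qed.

Lemma relator_crossing_even (f : T * 'I_4 * 'I_4 * 'I_4) :
  valid_flag f -> ~~ odd (count crossing_sign (relator gt gp f)).
Proof.
move=> valid_f.
have orbit_valid : {in fingraph.orbit (flagnext gt gp) f, forall g, valid_flag g}.
  move=> g /trajectP[i _ ->].
  by apply: (iter_in (S := (@valid_flag T : pred _))) => // h; apply: flagnext_valid.
rewrite /relator count_map (eq_in_count (a2 := fun g =>
  flag_potential g (+) flag_potential (flagnext gt gp g))); last first.
  by move=> g /orbit_valid /crossing_sign_flag.
apply: fcycle_count_addb.
exact: (cycle_orbit_in (S := (@valid_flag T : pred _)) flagnext_valid flagnext_inj).
Qed.

Lemma hstep_crossing_parity (p q : T * seq (T * 'I_4)) : hstep gt gp p q ->
  odd (count crossing_sign p.2) = odd (count crossing_sign q.2).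
Proof.
case=> _ _ [[x [s [-> ->]]] | [[s1 [s2 [x [_ [-> ->]]]]] |
                                  [s1 [s2 [f [valid_f [_ [-> ->]]]]]]]].
- by rewrite /= -cats1 count_cat /= addn0 addnC.
- by rewrite !count_cat /= crossing_sign_inv !oddD addKb.
- by rewrite !count_cat !oddD (negbTE (relator_crossing_even valid_f)).
Qed.

End VeeringTriangulation.

Theorem mainTheorem7 (T : finType) (gt : T -> 'I_4 -> T)
  (gp : T -> 'I_4 -> {perm 'I_4}) (veer : T -> {set 'I_4} -> bool)
  (tau : is_veering gt gp veer) (c1 c2 : T * seq (T * 'I_4)) :
  directed_cycle gt c1 -> directed_cycle gt c2 ->
  free_homotopic gt gp c1 c2 ->
  odd (n_antibranching gp veer c1.2) = odd (n_antibranching gp veer c2.2).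
Proof.
move=> directed_c1 directed_c2 homotopic.
rewrite !(directed_cycle_parity tau) //.
elim: homotopic {directed_c1 directed_c2} => [p q | p | p q _ -> | p q r _ -> _ ->] //.
exact: hstep_crossing_parity.
Qed.
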